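(* Let $\{R_i\}_{i\in I}$ be a family of commutative rings with identity and $R=\prod_{i\in I}R_i$. Then $R$ is nearly reduced if and only if each $R_i$ is nearly reduced.
   Context: For a ring $A$, $\mathfrak{N}(A)$ is the nilradical, $\mathrm{reg}(A)$ the set of regular elements (non-zero-divisors), and $\mathrm{areg}(A)=\{x\in A: x+\mathfrak{N}(A)\in\mathrm{reg}(A/\mathfrak{N}(A))\}$ (equivalently, $xa\in\mathfrak{N}(A)$ implies $a\in\mathfrak{N}(A)$). $A$ is nearly reduced if $\mathrm{reg}(A)=\mathrm{areg}(A)$ (equivalently, no nonzero element is annihilated by an element of $\mathrm{areg}(A)$). *)

From HB Require Import structures.
From mathcomp Require Import all_boot all_algebra.
From mathcomp Require Import boolp.
Set Implicit Arguments. Unset Strict Implicit. Unset Printing Implicit Defensive.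
Import GRing.Theory.
Local Open Scope ring_scope.

Definition nilrad (A : comPzRingType) : A -> Prop :=
  fun x => exists n : nat, x ^+ n = 0.

Definition reg (A : comPzRingType) : A -> Prop :=
  fun x => forall a : A, x * a = 0 -> a = 0.

(* areg(A) = {x : x + N(A) regular in A/N(A)}, i.e. x a in N(A) => a in N(A). *)
Definition areg (A : comPzRingType) : A -> Prop :=
  fun x => forall a : A, nilrad (x * a) -> nilrad a.

Definition nearly_reduced (A : comPzRingType) : Prop :=
  forall x : A, reg x <-> areg x.

Section DProd.
Variables (I : Type) (R : I -> comPzRingType).
Definition dprod := forall i : I, R i.
HB.instance Definition _ := Choice.on dprod.

Definition dp_zero : dprod := fun i => 0.
Definition dp_one : dprod := fun i => 1.
Definition dp_opp (f : dprod) : dprod := fun i => - f i.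
Definition dp_add (f g : dprod) : dprod := fun i => f i + g i.
Definition dp_mul (f g : dprod) : dprod := fun i => f i * g i.

Lemma dp_addA : associative dp_add.
Proof. by move=> f g h; apply: functional_extensionality_dep => i; rewrite /dp_add addrA. Qed.
Lemma dp_addC : commutative dp_add.
Proof. by move=> f g; apply: functional_extensionality_dep => i; rewrite /dp_add addrC. Qed.
Lemma dp_add0 : left_id dp_zero dp_add.
Proof. by move=> f; apply: functional_extensionality_dep => i; rewrite /dp_add add0r. Qed.
Lemma dp_addN : left_inverse dp_zero dp_opp dp_add.
Proof. by move=> f; apply: functional_extensionality_dep => i; rewrite /dp_add /dp_opp addNr. Qed.
Lemma dp_mulA : associative dp_mul.
Proof. by move=> f g h; apply: functional_extensionality_dep => i; rewrite /dp_mul mulrA. Qed.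
Lemma dp_mulC : commutative dp_mul.
Proof. by move=> f g; apply: functional_extensionality_dep => i; rewrite /dp_mul mulrC. Qed.
Lemma dp_mul1 : left_id dp_one dp_mul.
Proof. by move=> f; apply: functional_extensionality_dep => i; rewrite /dp_mul mul1r. Qed.
Lemma dp_mulD : left_distributive dp_mul dp_add.
Proof. by move=> f g h; apply: functional_extensionality_dep => i; rewrite /dp_mul /dp_add mulrDl. Qed.

HB.instance Definition _ := GRing.isZmodule.Build dprod dp_addA dp_addC dp_add0 dp_addN.
HB.instance Definition _ := GRing.Zmodule_isComPzRing.Build dprod dp_mulA dp_mulC dp_mul1 dp_mulD.
End DProd.

Lemma dprodE (I : Type) (R : I -> comPzRingType) (f g : dprod R) (i : I) :
  (f + g) i = f i + g i /\ (f * g) i = f i * g i /\ (0 : dprod R) i = 0 /\ (1 : dprod R) i = 1.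
Proof. by []. Qed.

(* Every regular element is almost regular, so a ring is nearly reduced exactly
   when every almost regular element is regular.  In R = prod R_i regularity is
   checked coordinatewise, and an almost regular f has almost regular
   coordinates (test f against elements supported at a single index).
   Conversely an almost regular x in R_i is the i-th coordinate of the element
   X that is x at i and 1 elsewhere, and X is almost regular: if (X a)^n = 0
   then a_j^n = 0 for j <> i and a_i^m = 0 for some m, so a^(n+m) = 0.  The
   uniform exponent n + m matters, since nilpotency in an infinite product
   needs one. *)

From HB Require Import structures.
From mathcomp Require Import all_boot all_algebra.
From mathcomp Require Import boolp.
Set Implicit Arguments. Unset Strict Implicit. Unset Printing Implicit Defensive.
Import GRing.Theory.
Local Open Scope ring_scope.

Section NearlyReduced.
Variable A : comPzRingType.

Lemma regP (x : A) : reg x <-> GRing.lreg x.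
Proof.
split=> [xreg a b xab|xreg a xa0]; last by apply: xreg; rewrite xa0 mulr0.
by apply/eqP; rewrite -subr_eq0; apply/eqP/xreg; rewrite mulrBr xab subrr.
Qed.

Lemma reg_areg (x : A) : reg x -> areg x.
Proof.
move=> /regP xreg a [n]; rewrite exprMn => xan0; exists n.
by apply: (@lregX _ x n xreg); rewrite xan0 mulr0.
Qed.

Lemma nearly_reducedP : nearly_reduced A <-> (forall x : A, areg x -> reg x).
Proof.
split=> nrA x; first by case: (nrA x).
by split; [exact: reg_areg | exact: nrA].
Qed.

End NearlyReduced.

Lemma dfwith_id (I : eqType) (T : I -> Type) (f : forall i, T i) (i : I) :
  dfwith f (f i) = f.
Proof. by apply: functional_extensionality_dep => j; case: dfwithP. Qed.

Section DirectProduct.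
Variables (I : Type) (R : I -> comPzRingType).
HB.instance Definition _ := gen_eqMixin I.
Implicit Types f : dprod R.

Local Notation single a := (dfwith (0 : dprod R) a : dprod R).

Lemma dprod_mulE f g i : (f * g) i = f i * g i.
Proof. by []. Qed.

Lemma dprod_exprn f n i : (f ^+ n) i = f i ^+ n.
Proof. by elim: n => [|n IHn]; rewrite ?expr0 // !exprS -IHn. Qed.

Lemma nilrad_dprodP f : nilrad f <-> exists n, forall i, f i ^+ n = 0.
Proof.
split=> -[n fn]; exists n; first by move=> i; rewrite -dprod_exprn fn.
by apply: functional_extensionality_dep => i; rewrite dprod_exprn fn.
Qed.

Lemma mul_single f i (a : R i) : f * single a = single (f i * a).
Proof.
apply: functional_extensionality_dep => j; rewrite dprod_mulE.
by case: (eqVneq i j) => [<-|ij]; rewrite ?dfwith_in // !dfwith_out // mulr0.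
Qed.

Lemma single_eq0 i (a : R i) : (single a = 0) <-> a = 0.
Proof.
split=> [a0|->]; last exact: (dfwith_id (0 : dprod R) i).
by rewrite -(dfwith_in (0 : dprod R) a) a0.
Qed.

Lemma nilrad_single i (a : R i) : nilrad (single a) <-> nilrad a.
Proof.
split=> [/nilrad_dprodP[n an0]|[n an0]].
  by exists n; rewrite -(dfwith_in (0 : dprod R) a) an0.
apply/nilrad_dprodP; exists n.+1 => j.
by case: dfwithP => [|k _]; rewrite ?exprS ?an0 ?mulr0 ?mul0r.
Qed.

Lemma reg_dprodP f : reg f <-> forall i, reg (f i).
Proof.
split=> [freg i a fia0|freg g fg0].
  by apply/single_eq0/freg; rewrite mul_single fia0; apply/single_eq0.
apply: functional_extensionality_dep => i; apply: freg.
by rewrite -dprod_mulE fg0.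
Qed.

Lemma areg_dprod_proj f i : areg f -> areg (f i).
Proof.
move=> fareg a /nilrad_single fia_nil.
by apply/nilrad_single/fareg; rewrite mul_single.
Qed.

Lemma areg_dprod_extend i (x : R i) :
  areg x -> exists2 f : dprod R, areg f & f i = x.
Proof.
move=> xareg; exists (dfwith (1 : dprod R) x); last exact: dfwith_in.
move=> a /nilrad_dprodP[n xan0]; apply/nilrad_dprodP.
have [m am0] : nilrad (a i).
  by apply: xareg; exists n; rewrite -(dfwith_in (1 : dprod R) x) -dprod_mulE.
exists (n + m)%N => j; rewrite exprD.
case: (eqVneq i j) => [<-|ij]; first by rewrite am0 mulr0.
by have := xan0 j; rewrite dprod_mulE dfwith_out // mul1r => ->; rewrite mul0r.
Qed.

End DirectProduct.

Theorem mainTheorem8 (I : Type) (R : I -> comPzRingType) :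
  nearly_reduced (dprod R) <-> (forall i : I, nearly_reduced (R i)).
Proof.
split=> [nrR i | nrRi].
  apply/nearly_reducedP => x /(@areg_dprod_extend _ R i)[f fareg <-].
  by have /reg_dprodP := (nearly_reducedP _).1 nrR f fareg.
apply/nearly_reducedP => f fareg; apply/reg_dprodP => i.
exact/(nearly_reducedP _).1/areg_dprod_proj.
Qed.
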